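(* Let $G$, $k\ge 3$, the choice strings, the template strings, $L$ and $d$ be as in the Consensus Patterns construction in the context, and let $s\in\{0,1\}^L$ together with a choice of one length-$L$ substring (match) in each choice string and each template string be a solution of the constructed instance (total Hamming distance at most $d$). Then $s$ and all its matches start with $\mathrm{front\_tag}$.
   Context: Let $G=(V,E)$ be an undirected simple graph with $V=\{v_1,\dots,v_n\}$ and edge set $E=\{e_1,\dots,e_m\}$, and let $k\ge 3$ be an integer. All strings are over $\{0,1\}$. For $1\le p\le n$ let $\mathrm{number}(p)=0^{p-1}10^{n-p}$. Let $\mathrm{front\_tag}=(1^{nk^3}0)^{nk^3}0^{nk^3}$ (length $n^2k^6+2nk^3$). For $1\le i<j\le k$ and an edge $e$ joining $v_r,v_s$ with $r<s$ let $\mathrm{encode}(i,j,e)=(0^n)^{i-1}\,\mathrm{number}(r)\,(0^n)^{j-i-1}\,\mathrm{number}(s)\,(0^n)^{k-j}$ and $\mathrm{block}(i,j,e)=\mathrm{front\_tag}\,\mathrm{encode}(i,j,e)$. The choice string is $c_{i,j}=\mathrm{block}(i,j,e_1)\cdots\mathrm{block}(i,j,e_m)$. There are $\binom{k}{2}-(k-1)$ template strings, each equal to $\mathrm{front\_tag}\,1^{nk}$. Set $L=n^2k^6+2nk^3+nk$ and $d=(\binom{k}{2}-(k-1))nk$. The instance consists of all choice strings and template strings; a solution is a string $s$ of length $L$ and a length-$L$ substring of each input string such that the sum of Hamming distances from $s$ to these substrings is at most $d$. *)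

(* binary strings are  seq bool  (false = 0, true = 1). *)
From mathcomp Require Import all_boot.
Set Implicit Arguments. Unset Strict Implicit. Unset Printing Implicit Defensive.

(* Vertices are 1, ..., n; an edge {v_r, v_s} with r < s is the pair (r, s).
   The edge set E = [e_1; ...; e_m] is a duplicate-free list of such pairs. *)
Definition simple_graph (n : nat) (E : seq (nat * nat)) : bool :=
  uniq E && all (fun e => (0 < e.1) && (e.1 < e.2) && (e.2 <= n)) E.

Definition zeros (n : nat) : seq bool := nseq n false.

Definition number (n p : nat) : seq bool :=
  zeros p.-1 ++ true :: zeros (n - p).

Definition front_tag (n k : nat) : seq bool :=
  flatten (nseq (n * k ^ 3) (rcons (nseq (n * k ^ 3) true) false))
  ++ zeros (n * k ^ 3).

Definition encode (n k i j : nat) (e : nat * nat) : seq bool :=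
  flatten (nseq (i - 1) (zeros n)) ++ number n e.1 ++
  flatten (nseq (j - i - 1) (zeros n)) ++ number n e.2 ++
  flatten (nseq (k - j) (zeros n)).

Definition block (n k i j : nat) (e : nat * nat) : seq bool :=
  front_tag n k ++ encode n k i j e.

Definition choice_string (n k : nat) (E : seq (nat * nat)) (i j : nat)
  : seq bool := flatten [seq block n k i j e | e <- E].

Definition template (n k : nat) : seq bool := front_tag n k ++ nseq (n * k) true.

Definition num_templates (k : nat) : nat := 'C(k, 2) - (k - 1).

Definition pairs (k : nat) : seq (nat * nat) :=
  [seq (i, j) | i <- iota 1 k, j <- iota i.+1 (k - i)].

Definition Len (n k : nat) : nat := n ^ 2 * k ^ 6 + 2 * n * k ^ 3 + n * k.
Definition dist_bound (n k : nat) : nat := num_templates k * (n * k).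

(* Hamming distance (used on strings of equal length) *)
Definition hamming (s t : seq bool) : nat :=
  count id [seq x.1 != x.2 | x <- zip s t].

(* the length-l substring of w starting at (0-based) position p *)
Definition substr (w : seq bool) (p l : nat) : seq bool := take l (drop p w).

From Pilot Require Import Defs.
From mathcomp Require Import all_boot zify.
Set Implicit Arguments. Unset Strict Implicit. Unset Printing Implicit Defensive.

(* The budget d is T * nk, where T is the number of templates.  A match that
   starts inside a block of a choice string, rather than at a block boundary,
   lays the 1-runs of some block tag over about nk^3 zeros of the template's
   front tag, so by the triangle inequality through s it alone costs more
   than d.  Hence every choice match is a whole block
   front_tag ++ encode(i, j, e), and every template match is the template.
   In each of the last nk columns, at most k - 1 of the C(k, 2) encodings
   carry a 1, so whatever s has there costs at least T; the tails of the
   matches already use up the whole budget, and the front part of s must be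
   exactly front_tag. *)

Section Hamming.
Implicit Types u v w : seq bool.

Lemma hamming_cons a b u v : hamming (a :: u) (b :: v) = (a != b) + hamming u v.
Proof. by []. Qed.

Lemma hamming_sym u v : hamming u v = hamming v u.
Proof. by elim: u v => [|a u IH] [|b v] //=; rewrite !hamming_cons IH eq_sym. Qed.

Lemma hamming_cat u1 u2 v1 v2 : size u1 = size v1 ->
  hamming (u1 ++ u2) (v1 ++ v2) = hamming u1 v1 + hamming u2 v2.
Proof. by elim: u1 v1 => [|a u IH] [|b v] //= [/IH]; rewrite !hamming_cons -addnA => ->. Qed.

Lemma hamming_triangle u v w : size u = size v -> size v = size w ->
  hamming u w <= hamming u v + hamming v w.
Proof.
elim: u v w => [|a u IH] [|b v] [|c w] //= [/IH uv] [/uv{}IH].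
by rewrite !hamming_cons; case: a; case: b; case: c => /=; lia.
Qed.

Lemma hamming_eq0 u v : size u = size v -> (hamming u v == 0) = (u == v).
Proof.
elim: u v => [|a u IH] [|b v] //= [/IH].
by rewrite hamming_cons addn_eq0 eqseq_cons eqb0 negbK => ->.
Qed.

Lemma hamming_count u v : size u = size v ->
  hamming u v = count (fun x => nth false u x != nth false v x) (iota 0 (size u)).
Proof.
elim: u v => [|a u IH] [|b v] //= [/IH eq_uv].
by rewrite hamming_cons eq_uv -(addn0 1) iotaDl count_map.
Qed.

Lemma hamming_sum u v : size u = size v ->
  hamming u v = \sum_(x < size u) (nth false u x != nth false v x).
Proof.
elim: u v => [|a u IH] [|b v] //=; first by rewrite big_ord0.
by move=> [/IH eq_uv]; rewrite hamming_cons eq_uv big_ord_recl.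
Qed.

Lemma mismatches_leq_hamming u v xs : size u = size v -> uniq xs ->
  (forall x, x \in xs -> x < size u /\ nth false u x != nth false v x) ->
  size xs <= hamming u v.
Proof.
move=> eq_uv xs_uniq mism; rewrite hamming_count // -size_filter.
by apply: uniq_leq_size => // x /mism[lt_x ne_x]; rewrite mem_filter ne_x mem_iota.
Qed.

End Hamming.

Lemma sub_in_count (T : eqType) (a b : pred T) s :
  {in s, subpred a b} -> count a s <= count b s.
Proof.
move=> sub_ab; rewrite -!size_filter.
have -> : filter a s = filter a (filter b s).
  by rewrite -filter_predI; apply: eq_in_filter => x /sub_ab /=; case: (a x) => // ->.
by rewrite size_filter count_size.
Qed.

Lemma leq_sum_hamming_ones m t s (ws : seq (seq bool)) :
  size s = m -> all (fun w => size w == m) ws ->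
  (forall x, x < m -> t + count (fun w => nth false w x) ws <= size ws) ->
  t * m <= \sum_(w <- ws) hamming s w + t * hamming s (nseq m true).
Proof.
move=> size_s ws_size col_bound.
rewrite (eq_big_seq (fun w => \sum_(x < m) (nth false s x != nth false w x))); last first.
  by move=> w /(allP ws_size)/eqP size_w; rewrite hamming_sum size_s.
rewrite hamming_sum ?size_nseq // size_s exchange_big big_distrr -big_split /=.
apply: leq_trans (_ : \sum_(x < m) t <= _); first by rewrite big_const_ord iter_addn_0.
apply: leq_sum => x _; rewrite nth_nseq ltn_ord.
case: (nth false s x); last by rewrite muln1 leq_addl.
rewrite muln0 addn0.
have -> : \sum_(w <- ws) (true != nth false w x) = count (predC (fun w => nth false w x)) ws.
  by rewrite -sum1_count [RHS]big_mkcond; apply: eq_bigr => w _ /=; case: nth.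
have := count_predC (fun w => nth false w x) ws; have := col_bound x (ltn_ord x); lia.
Qed.

Lemma size_substr w p l : p + l <= size w -> size (substr w p l) = l.
Proof. by move=> fits; rewrite size_takel // size_drop leq_subRL // (leq_trans (leq_addr l p)). Qed.

Section UniformFlatten.
Variables (T : Type) (m : nat).
Implicit Type ss : seq (seq T).
Local Notation uniform ss := (all (fun s => size s == m) ss).

Lemma size_flatten_uniform ss : uniform ss -> size (flatten ss) = size ss * m.
Proof.
elim: ss => //= s ss IH /andP[/eqP size_s /IH].
by rewrite size_cat size_s mulSn => ->.
Qed.

Lemma nth_flatten_uniform ss x0 y : 0 < m -> uniform ss ->
  nth x0 (flatten ss) y = nth x0 (nth [::] ss (y %/ m)) (y %% m).
Proof.
move=> m_gt0; elim: ss y => [|s ss IH] y /=; first by rewrite !nth_nil.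
move=> /andP[/eqP size_s /IH{}IH]; rewrite nth_cat size_s.
have [lt_ym | le_my] := ltnP y m; first by rewrite divn_small // modn_small.
rewrite IH; move: (y - m) (subnK le_my) => z <-.
by rewrite divnDr ?dvdnn // divnn m_gt0 addn1 modnDr.
Qed.

Lemma take_drop_flatten_uniform ss q : uniform ss -> q < size ss ->
  take m (drop (q * m) (flatten ss)) = nth [::] ss q.
Proof.
move=> ss_unif lt_q.
move: (ss_unif); rewrite -{1}(cat_take_drop q ss) all_cat => /andP[take_unif _].
rewrite -{1}(cat_take_drop q ss) flatten_cat.
rewrite drop_size_cat; last by rewrite size_flatten_uniform // size_takel // ltnW.
by rewrite (drop_nth [::]) //= take_size_cat // (eqP (all_nthP [::] ss_unif _ lt_q)).
Qed.
End UniformFlatten.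

Lemma size_flatten_nseq T m (s : seq T) : size (flatten (nseq m s)) = m * size s.
Proof. by rewrite size_flatten /shape map_nseq sumn_nseq mulnC. Qed.

Lemma flatten_nseq_nseq T a b (x : T) : flatten (nseq a (nseq b x)) = nseq (a * b) x.
Proof. by elim: a => //= a ->; rewrite mulSn nseqD. Qed.

Section FrontTag.
Variables n k : nat.
Local Notation N := (n * k ^ 3).

Lemma size_front_tag : size (front_tag n k) = N * N.+1 + N.
Proof. by rewrite size_cat size_flatten_nseq size_rcons !size_nseq. Qed.

Lemma Len_front_tag : Len n k = size (front_tag n k) + n * k.
Proof. rewrite size_front_tag /Len; nia. Qed.

Lemma nth_front_tag x :
  nth false (front_tag n k) x = (x < N * N.+1) && (x %% N.+1 != N).
Proof.
rewrite nth_cat size_flatten_nseq size_rcons size_nseq.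
have [lt_x | ] := ltnP; last by rewrite nth_nseq if_same.
rewrite (nth_flatten_uniform _ _ (ltn0Sn N)) ?all_nseq ?size_rcons ?size_nseq ?eqxx ?orbT //.
rewrite nth_nseq ltn_divLR // lt_x nth_rcons size_nseq.
have := ltn_pmod x (ltn0Sn N); rewrite ltnS leq_eqVlt => /predU1P[-> | lt_xN].
  by rewrite ltnn eqxx.
by rewrite lt_xN nth_nseq lt_xN ltn_eqF.
Qed.

End FrontTag.

Definition valid_edge n (e : nat * nat) := (0 < e.1) && (e.1 < e.2) && (e.2 <= n).

Lemma nth_number n p x : nth false (Defs.number n p) x = (x == p.-1).
Proof.
rewrite nth_cat size_nseq; case: ltngtP => [lt_x | lt_p | ->]; last by rewrite subnn.
  by rewrite nth_nseq if_same.
by move: lt_p; rewrite -subn_gt0; case: (x - p.-1) => //= y _; rewrite nth_nseq if_same.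
Qed.

Lemma size_number n p : 0 < p <= n -> size (Defs.number n p) = n.
Proof. by rewrite size_cat /= !size_nseq; lia. Qed.

Lemma nth_zeros_cat a s x : nth false (zeros a ++ s) x = (a <= x) && nth false s (x - a).
Proof. by rewrite nth_cat size_nseq; case: ltnP => // _; rewrite nth_nseq if_same. Qed.

Lemma nth_number_cat n p s x : 0 < p <= n ->
  nth false (Defs.number n p ++ s) x = if x < n then x == p.-1 else nth false s (x - n).
Proof. by move=> p_range; rewrite nth_cat size_number // nth_number. Qed.

Section Encode.
Variables (n k i j : nat) (e : nat * nat).
Hypotheses (i_gt0 : 0 < i) (lt_ij : i < j) (le_jk : j <= k) (e_valid : valid_edge n e).

Lemma size_encode : size (encode n k i j e) = n * k.
Proof.
case/andP: e_valid => /andP[e1_gt0 lt_e] le_e2n.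
by rewrite /encode /zeros !size_cat !flatten_nseq_nseq /= !size_nseq; nia.
Qed.

Lemma nth_encode x : nth false (encode n k i j e) x =
  (x == i.-1 * n + e.1.-1) || (x == j.-1 * n + e.2.-1).
Proof.
case/andP: e_valid => /andP[e1_gt0 lt_e] le_e2n.
have e1_range : 0 < e.1 <= n by lia.
have e2_range : 0 < e.2 <= n by lia.
rewrite /encode !flatten_nseq_nseq nth_zeros_cat (nth_number_cat _ _ e1_range).
rewrite nth_zeros_cat (nth_number_cat _ _ e2_range) nth_nseq if_same.
have -> : j.-1 * n = (i - 1) * n + n + (j - i - 1) * n by nia.
rewrite -(subn1 i); move: ((i - 1) * n) ((j - i - 1) * n) => A B.
by repeat case: ifP => ?; lia.
Qed.

Lemma encode_support x : nth false (encode n k i j e) x ->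
  (i == (x %/ n).+1) || (j == (x %/ n).+1).
Proof.
case/andP: e_valid => /andP[e1_gt0 lt_e] le_e2n.
rewrite nth_encode => /orP[] /eqP ->; rewrite divnMDl ?divn_small; lia.
Qed.
End Encode.

Lemma size_template n k : size (template n k) = Len n k.
Proof. by rewrite size_cat size_nseq Len_front_tag. Qed.

Section TagArithmetic.
Variables n k : nat.
Local Notation N := (n * k ^ 3).
Local Notation M := N.+1.
Local Notation L := (Len n k).

(* A window starting at offset r of a block has, at its position x, a 1 of a
   block's front tag, where the template's front tag has a 0. *)
Definition tag_clash r x :=
  [&& x < N * M + N, ~~ nth false (front_tag n k) x,
      (r + x) %% L < N * M & (r + x) %% L %% M != N].

Lemma Len_tag : L = N * M + N + n * k.
Proof. by rewrite Len_front_tag size_front_tag. Qed.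

Lemma tag_one_position u a : u < N -> a < N -> u * M + a < N * M /\ (u * M + a) %% M != N.
Proof.
move=> lt_u lt_a; rewrite modnMDl modn_small ?(ltn_eqF lt_a); last lia.
split=> //; have : u.+1 * M <= N * M by rewrite leq_pmul2r.
rewrite mulSn; lia.
Qed.

Lemma edge_tag_clash r t : 0 < r < L -> (r <= N) || (L - N <= r) -> 0 < t < N.-1 ->
  tag_clash r (t * M + N).
Proof.
move=> r_range r_edge t_range; have L_eq := Len_tag.
have lt_tN : t < N by lia.
rewrite /tag_clash nth_front_tag modnMDl modn_small // eqxx andbF ltn_add2r ltn_pmul2r //=.
case/orP: r_edge => [le_rN | le_Lr].
  have [lt_tN1 lt_r1] : t.+1 < N /\ r.-1 < N by lia.
  have [lt_o o_one] := tag_one_position lt_tN1 lt_r1; rewrite mulSn in lt_o o_one.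
  have -> : r + (t * M + N) = M + t * M + r.-1 by lia.
  by rewrite modn_small ?lt_o //; lia.
have lt_a : N - (L - r) < N by lia.
have [lt_o o_one] := tag_one_position lt_tN lt_a.
have -> : r + (t * M + N) = t * M + (N - (L - r)) + L by lia.
by rewrite modnDr modn_small ?lt_o //; lia.
Qed.

(* The excluded x is the one position of the window lying on a separator 0. *)
Lemma middle_tag_clash r x : N < r < L - N -> N * M + n * k <= x < N * M + N ->
  x != N * M + n * k + (N - (r - N) %% M) -> tag_clash r x.
Proof.
move=> r_range x_range x_ne; have L_eq := Len_tag.
rewrite /tag_clash nth_front_tag (_ : (x < N * M) = false) /=; last lia.
have -> : r + x = (r - N) + (x - (N * M + n * k)) + L by lia.
rewrite modnDr modn_small; last lia.
apply/and3P; split; try lia.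
rewrite -modnDml; have lt_b : (r - N) %% M < M := ltn_pmod _ (ltn0Sn N).
move: ((r - N) %% M) lt_b x_ne => b lt_b x_ne.
have [lt_bM | le_Mb] := ltnP (b + (x - (N * M + n * k))) M.
  by rewrite modn_small //; lia.
have -> : b + (x - (N * M + n * k)) = b + (x - (N * M + n * k)) - M + M by lia.
by rewrite modnDr modn_small; lia.
Qed.

End TagArithmetic.

Section Misalignment.
Variables (n k : nat) (c : seq bool) (p : nat).
Local Notation N := (n * k ^ 3).
Local Notation M := N.+1.
Local Notation L := (Len n k).
Local Notation r := (p %% L).
Hypothesis c_tagged : forall y, y < size c ->
  y %% L < N * M -> y %% L %% M != N -> nth false c y.
Hypothesis fits : p + L <= size c.

Lemma tag_clashes_leq_hamming xs : uniq xs -> {in xs, forall x, tag_clash n k r x} ->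
  size xs <= hamming (substr c p L) (template n k).
Proof.
have size_w := size_substr fits.
move=> xs_uniq xs_clash; apply: mismatches_leq_hamming => // [|x].
  by rewrite size_w size_template.
move=> /xs_clash/and4P[lt_x ft_x lt_o o_one]; rewrite modnDml in lt_o o_one.
have lt_xL : x < L by rewrite Len_tag; lia.
rewrite size_w lt_xL /substr nth_take // nth_drop c_tagged //; last lia.
by rewrite /template nth_cat size_front_tag lt_x; move: ft_x; case: nth.
Qed.

Lemma misaligned_far_from_template : 0 < n * k -> r != 0 ->
  N - n * k - 1 <= hamming (substr c p L) (template n k).
Proof.
move=> nk_gt0; rewrite -lt0n => r_gt0; have L_eq := Len_tag n k.
have lt_rL : r < L by rewrite ltn_pmod // L_eq; lia.
have [r_edge | r_middle] := boolP ((r <= N) || (L - N <= r)).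
  apply: leq_trans (_ : N - 2 <= _); first lia.
  rewrite -(size_iota 1 (N - 2)) -(size_map (fun t => t * M + N)).
  apply: tag_clashes_leq_hamming.
    by rewrite map_inj_uniq ?iota_uniq // => t1 t2 /addIn /eqP; rewrite eqn_pmul2r // => /eqP.
  move=> x /mapP[t]; rewrite mem_iota => t_range ->.
  by apply: edge_tag_clash; rewrite ?r_gt0 ?lt_rL //; lia.
set z := N * M + n * k + (N - (r - N) %% M).
apply: leq_trans (_ : size (rem z (iota (N * M + n * k) (N - n * k))) <= _).
  have [z_in | z_notin] := boolP (z \in iota (N * M + n * k) (N - n * k)).
    by rewrite size_rem // size_iota; lia.
  by rewrite rem_id // size_iota; lia.
apply: tag_clashes_leq_hamming; first exact/rem_uniq/iota_uniq.
move=> x; rewrite mem_rem_uniq ?iota_uniq // => /andP[/= x_ne]; rewrite mem_iota => x_range.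
by apply: middle_tag_clash => //; lia.
Qed.

End Misalignment.

Lemma num_templates_add k : num_templates k + k.-1 = 'C(k, 2).
Proof. have := mul_bin_left k 1; rewrite bin1 /num_templates; nia. Qed.

Lemma double_num_templates k : (num_templates k).*2 = k.-1 * (k - 2).
Proof. have := mul_bin_left k 1; rewrite bin1 /num_templates; nia. Qed.

Lemma dist_bound_lt n k : 0 < n -> 3 <= k -> dist_bound n k < n * k ^ 3 - n * k - 1.
Proof. move=> n_gt0 k_ge3; have := double_num_templates k; rewrite /dist_bound; nia. Qed.

Lemma mem_pairs k ij : (ij \in pairs k) = (0 < ij.1 < ij.2) && (ij.2 <= k).
Proof.
case: ij => i j; apply/allpairsPdep/idP => [[a [b [+ + [-> ->]]]] | /= ij_range].
  by rewrite !mem_iota /=; lia.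
by exists i, j; rewrite !mem_iota; split=> //; lia.
Qed.

Lemma uniq_pairs k : uniq (pairs k).
Proof.
apply: allpairs_uniq_dep => [|i _|[i1 j1] [i2 j2] _ _ [-> ->]] //; exact: iota_uniq.
Qed.

Lemma size_pairs k : size (pairs k) = 'C(k, 2).
Proof.
rewrite size_allpairs_dep -bin2_sum big_nat_rev /= -(addn0 1) iotaDl -map_comp sumnE big_map.
by rewrite /index_iota subn0; apply: eq_bigr => i _ /=; rewrite size_iota add0n.
Qed.

Lemma count_pairs_touching k a : 0 < a <= k ->
  count (fun ij : nat * nat => (ij.1 == a) || (ij.2 == a)) (pairs k) <= k.-1.
Proof.
move=> a_range; pose other ij : nat := if ij.1 == a then ij.2 else ij.1.
have size_others : size (rem a (iota 1 k)) = k.-1.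
  by rewrite size_rem ?size_iota // mem_iota; lia.
rewrite -size_filter -(size_map other) -size_others; apply: uniq_leq_size.
  rewrite map_inj_in_uniq ?filter_uniq ?uniq_pairs // => -[i1 j1] [i2 j2].
  rewrite !mem_filter !mem_pairs /other /= => /andP[t1 r1] /andP[t2 r2].
  by case: ifP => ?; case: ifP => ? e; congr pair; lia.
move=> x /mapP[[i j]]; rewrite mem_filter mem_pairs /other /= => /andP[t r] ->.
by rewrite mem_rem_uniq ?iota_uniq // inE mem_iota; case: ifP => ?; lia.
Qed.

Section ChoiceString.
Variables (n k i j : nat) (E : seq (nat * nat)).
Hypotheses (i_gt0 : 0 < i) (lt_ij : i < j) (le_jk : j <= k).
Hypothesis E_valid : all (valid_edge n) E.
Local Notation N := (n * k ^ 3).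
Local Notation L := (Len n k).
Local Notation c := (choice_string n k E i j).

Lemma size_block e : valid_edge n e -> size (block n k i j e) = L.
Proof. by move=> e_valid; rewrite size_cat size_encode // Len_front_tag. Qed.

Lemma blocks_uniform : all (fun b => size b == L) [seq block n k i j e | e <- E].
Proof. by rewrite all_map; apply: sub_all E_valid => e /size_block /= ->. Qed.

Lemma size_choice_string : size c = size E * L.
Proof. by rewrite (size_flatten_uniform blocks_uniform) size_map. Qed.

Lemma choice_string_tagged y : y < size c ->
  y %% L < N * N.+1 -> y %% L %% N.+1 != N -> nth false c y.
Proof.
rewrite size_choice_string => lt_y lt_o o_one.
have L_gt0 : 0 < L by case: posnP lt_y => // ->; rewrite muln0.
rewrite (nth_flatten_uniform _ _ L_gt0 blocks_uniform) (nth_map (0, 0)) ?ltn_divLR //.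
by rewrite nth_cat size_front_tag ltn_addr // nth_front_tag lt_o o_one.
Qed.

Lemma aligned_substr_choice_string p : 0 < n -> p + L <= size c -> p %% L = 0 ->
  exists2 e, valid_edge n e & substr c p L = block n k i j e.
Proof.
move=> n_gt0 fits p_aligned; have L_gt0 : 0 < L by rewrite Len_front_tag; nia.
have p_eq : p = p %/ L * L by rewrite {1}(divn_eq p L) p_aligned addn0.
have lt_q : p %/ L < size E.
  by rewrite -(ltn_pmul2r L_gt0) -p_eq -size_choice_string; lia.
exists (nth (0, 0) E (p %/ L)); first exact: all_nthP.
by rewrite /substr {1}p_eq (take_drop_flatten_uniform blocks_uniform) ?size_map // (nth_map (0, 0)).
Qed.

Lemma close_match_block s p : 0 < n -> 3 <= k -> size s = L -> p + L <= size c ->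
  hamming s (substr c p L) + hamming s (template n k) <= dist_bound n k ->
  exists2 e, valid_edge n e & substr c p L = block n k i j e.
Proof.
move=> n_gt0 k_ge3 size_s fits close; apply: aligned_substr_choice_string => //.
apply/eqP; apply: contraTT close => misaligned; rewrite -ltnNge.
have nk_gt0 : 0 < n * k by rewrite muln_gt0 n_gt0; lia.
have far := misaligned_far_from_template choice_string_tagged fits nk_gt0 misaligned.
have size_w := size_substr fits.
have := hamming_triangle (etrans size_w (esym size_s)) (etrans size_s (esym (size_template n k))).
rewrite [hamming _ s]hamming_sym; have := dist_bound_lt n_gt0 k_ge3; lia.
Qed.

End ChoiceString.

Lemma substr_template n k p : p + Len n k <= size (template n k) ->
  substr (template n k) p (Len n k) = template n k.
Proof.
rewrite size_template => fits; have -> : p = 0 by lia.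
by rewrite /substr drop0 take_oversize // size_template.
Qed.

Lemma num_templates_gt0 k : 3 <= k -> 0 < num_templates k.
Proof. by move=> k_ge3; have := double_num_templates k; nia. Qed.

Section FrontOfSolution.
Variables (n k : nat) (s : seq bool) (w : nat * nat -> seq bool).
Hypotheses (n_gt0 : 0 < n) (k_ge2 : 2 <= k) (size_s : size s = Len n k).
Hypothesis w_blocks : forall ij, ij \in pairs k ->
  exists2 e, valid_edge n e & w ij = block n k ij.1 ij.2 e.
Local Notation F := (front_tag n k).
Local Notation tail ij := (drop (size F) (w ij)).

Lemma tail_encode ij : ij \in pairs k ->
  exists2 e, valid_edge n e & tail ij = encode n k ij.1 ij.2 e.
Proof. by move=> /w_blocks[e e_valid ->]; exists e; rewrite // drop_size_cat. Qed.

Lemma size_tail ij : ij \in pairs k -> size (tail ij) = n * k.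
Proof.
move=> ij_in; have [e e_valid ->] := tail_encode ij_in.
by move: ij_in; rewrite mem_pairs => /andP[/andP[i_gt0 lt_ij] le_jk]; apply: size_encode.
Qed.

Lemma tails_sparse x : x < n * k -> count (fun ij => nth false (tail ij) x) (pairs k) <= k.-1.
Proof.
move=> lt_x; apply: leq_trans (count_pairs_touching (_ : 0 < (x %/ n).+1 <= k)); last first.
  by rewrite ltnS ltn_divLR // mulnC.
apply: sub_in_count => ij ij_in; have [e e_valid ->] := tail_encode ij_in.
by move: ij_in; rewrite mem_pairs => /andP[/andP[i_gt0 lt_ij] le_jk]; apply: encode_support.
Qed.

Lemma solution_front_tag :
  \sum_(ij <- pairs k) hamming s (w ij) + num_templates k * hamming s (template n k)
    <= dist_bound n k ->
  prefix F s.
Proof.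
set s1 := drop (size F) s; set T := num_templates k.
have size_s1 : size s1 = n * k by rewrite size_drop size_s Len_front_tag addKn.
have s_split : s = take (size F) s ++ s1 by rewrite cat_take_drop.
have size_s0 : size (take (size F) s) = size F.
  by rewrite size_takel // size_s Len_front_tag leq_addr.
set h0 := hamming (take (size F) s) F.
have ham_w : {in pairs k, forall ij, hamming s (w ij) = h0 + hamming s1 (tail ij)}.
  by move=> ij /w_blocks[e _ ->]; rewrite {1}s_split hamming_cat // drop_size_cat.
rewrite (eq_big_seq _ ham_w) big_split big_const_seq count_predT iter_addn_0 /=.
rewrite {1}s_split /template hamming_cat // -/h0 mulnDr size_pairs => total.
have column : T * (n * k) <=
    \sum_(u <- [seq tail ij | ij <- pairs k]) hamming s1 u + T * hamming s1 (nseq (n * k) true).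
  apply: leq_sum_hamming_ones size_s1 _ _ => [|x lt_x].
    by apply/allP => _ /mapP[ij ij_in ->]; rewrite size_tail.
  by rewrite size_map size_pairs -num_templates_add count_map leq_add2l tails_sparse.
rewrite big_map in column; rewrite /dist_bound -/T in total.
have C_gt0 : 0 < 'C(k, 2) by rewrite bin_gt0.
have /eqP : h0 = 0 by nia.
by rewrite hamming_eq0 // => /eqP take_F; rewrite s_split take_F prefix_prefix.
Qed.

End FrontOfSolution.

Theorem lemma6 (n k : nat) (E : seq (nat * nat)) (s : seq bool)
    (pc : nat -> nat -> nat) (pt : nat -> nat) :
  3 <= k ->
  simple_graph n E ->
  size s = Len n k ->
  (forall ij, ij \in pairs k ->
     pc ij.1 ij.2 + Len n k <= size (choice_string n k E ij.1 ij.2)) ->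
  (forall t, t < num_templates k -> pt t + Len n k <= size (template n k)) ->
  \sum_(ij <- pairs k)
      hamming s (substr (choice_string n k E ij.1 ij.2) (pc ij.1 ij.2) (Len n k))
  + \sum_(t < num_templates k)
      hamming s (substr (template n k) (pt t) (Len n k))
  <= dist_bound n k ->
  prefix (front_tag n k) s /\
  (forall ij, ij \in pairs k ->
     prefix (front_tag n k)
       (substr (choice_string n k E ij.1 ij.2) (pc ij.1 ij.2) (Len n k))) /\
  (forall t, t < num_templates k ->
     prefix (front_tag n k) (substr (template n k) (pt t) (Len n k))).
Proof.
move=> k_ge3 /andP[_ E_valid] size_s pc_fits pt_fits.
have [-> | n_gt0] := posnP n.
  by rewrite /front_tag mul0n; do !split=> *; apply: prefix0s.
under [X in _ + X]eq_bigr => t _ do rewrite substr_template ?pt_fits //.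
rewrite big_const_ord iter_addn_0 mulnC => total.
set w := fun ij : nat * nat => substr (choice_string n k E ij.1 ij.2) (pc ij.1 ij.2) (Len n k).
have w_blocks ij : ij \in pairs k -> exists2 e, valid_edge n e & w ij = block n k ij.1 ij.2 e.
  move=> ij_in; move: (ij_in); rewrite mem_pairs => /andP[/andP[i_gt0 lt_ij] le_jk].
  apply: close_match_block size_s _ _ => //; first exact: pc_fits.
  apply: leq_trans total; apply: leq_add; first by rewrite (big_rem ij) //= leq_addr.
  by rewrite leq_pmull // num_templates_gt0.
split; first exact: solution_front_tag n_gt0 (ltnW k_ge3) size_s w_blocks total.
split=> [ij /w_blocks[e _ w_block] | t /pt_fits/substr_template ->]; last exact: prefix_prefix.
by rewrite -/(w ij) w_block prefix_prefix.
Qed.
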